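(* Let $\mathcal{A}$ be a finite-dimensional real associative unital algebra with a norm, let $U$ be an open connected subset of $\mathcal{A}$, and let $f_n:U\to\mathcal{A}$ be $\mathcal{A}$-differentiable on $U$ for each $n\in\mathbb{N}$. Suppose that (i) there exists a point $z_0\in U$ such that the sequence $\{f_n(z_0)\}$ converges in $\mathcal{A}$, and (ii) for every $a\in U$ there is an open ball $B(a)$ centered at $a$, contained in $U$, on which the sequence of derivatives $\{f_n'\}$ converges uniformly. Then for each $a\in U$ the sequence $\{f_n\}$ converges uniformly on $B(a)$; moreover, setting $f(z)=\lim_{n\to\infty}f_n(z)$ and $g(z)=\lim_{n\to\infty}f_n'(z)$ for $z\in U$, the function $f$ is $\mathcal{A}$-differentiable on $U$ and $f'(z)=g(z)$ for each $z\in U$.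
   Context: A linear map $T:\mathcal{A}\to\mathcal{A}$ is right $\mathcal{A}$-linear if $T(x\star y)=T(x)\star y$ for all $x,y$. A function $f$ on an open set containing $p$ is $\mathcal{A}$-differentiable at $p$ if there is a right $\mathcal{A}$-linear map $d_pf$ with $\lim_{h\to0}\frac{f(p+h)-f(p)-d_pf(h)}{\|h\|}=0$ (i.e. $f$ is Fréchet differentiable at $p$ with right $\mathcal{A}$-linear differential). Its $\mathcal{A}$-derivative is $f'(p)=d_pf(1)$, where $1$ is the unit. *)

From HB Require Import structures.
From mathcomp Require Import all_boot all_order all_algebra.
From mathcomp Require Import all_classical all_reals all_analysis.
Set Implicit Arguments. Unset Strict Implicit. Unset Printing Implicit Defensive.
Import Order.TTheory GRing.Theory Num.Theory.
Import numFieldNormedType.Exports.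
Local Open Scope classical_set_scope.
Local Open Scope ring_scope.

Definition finite_dim (R : realType) (A : normedModType R) : Prop :=
  exists (n : nat) (e : 'I_n -> A),
    forall x : A, exists c : 'I_n -> R, x = \sum_(i < n) c i *: e i.

Definition is_unital_algebra (R : realType) (A : normedModType R)
    (mul : A -> A -> A) (one : A) : Prop :=
  [/\ forall x y z, mul x (mul y z) = mul (mul x y) z,
      forall x, mul one x = x,
      forall x, mul x one = x,
      forall (a : R) x y z, mul (a *: x + y) z = a *: mul x z + mul y z &
      forall (a : R) x y z, mul z (a *: x + y) = a *: mul z x + mul z y].

Definition right_A_linear (R : realType) (A : normedModType R)
    (mul : A -> A -> A) (T : A -> A) : Prop :=
  forall x y, T (mul x y) = mul (T x) y.

Definition A_differentiable (R : realType) (A : normedModType R)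
    (mul : A -> A -> A) (f : A -> A) (p : A) : Prop :=
  differentiable f p /\ right_A_linear mul ('d f p).

Definition A_derivative (R : realType) (A : normedModType R)
    (one : A) (f : A -> A) (p : A) : A := 'd f p one.

Definition unif_cvg_on (R : realType) (A : normedModType R)
    (S : set A) (u : nat -> A -> A) : Prop :=
  exists g : A -> A, forall e : R, 0 < e -> exists N : nat,
    forall n : nat, (N <= n)%N -> forall z, S z -> `|u n z - g z| < e.

From HB Require Import structures.
From mathcomp Require Import all_boot all_order all_algebra.
From mathcomp Require Import all_classical all_reals all_analysis.
From mathcomp Require Import ring lra.
Set Implicit Arguments. Unset Strict Implicit. Unset Printing Implicit Defensive.
Import Order.TTheory GRing.Theory Num.Theory.
Import numFieldNormedType.Exports.
Local Open Scope classical_set_scope.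
Local Open Scope ring_scope.

(* Fix a basis of A; compactness of the unit sphere of 'rV_n makes the
   coordinate functionals bounded.  Hence A is complete, the product is a
   bounded bilinear map, and the real mean value theorem applied coordinatewise
   gives a mean value inequality.  On a ball where the f_n' converge uniformly,
   the differential of f_p - f_q at z is h |-> (f_p'(z) - f_q'(z)) h, so
   f_p - f_q is Lipschitz on the ball with a constant tending to 0: convergence
   of (f_n) at one point of the ball gives uniform convergence on all of it.
   The points of U where (f_n) converges thus form a nonempty subset of U that
   is open and closed in U, hence all of U.  Letting q -> oo in the Lipschitz
   estimate for f_q - f_k bounds the increments of F - f_k, and
   F(z+h) - F(z) - g(z) h splits into such an increment, the remainder of f_k
   at z, and (f_k'(z) - g(z)) h, where g = lim f_n'. *)

Lemma bounded_linear_continuous (R : realType) (V W : normedModType R)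
    (f : {linear V -> W}) (K : R) :
  (forall x, `|f x| <= K * `|x|) -> continuous f.
Proof.
move=> fK; apply/linear_bounded_continuous/linear_boundedP.
by near=> r => x; rewrite (le_trans (fK x)) // ler_wpM2r.
Unshelve. all: by end_near. Qed.

Lemma cvg_norm_le (R : realType) (V : normedModType R) (T : Type)
    (F : set_system T) {FF : ProperFilter F} (u : T -> V) (l : V) (c : R) :
  u @ F --> l -> (\forall t \near F, `|u t| <= c) -> `|l| <= c.
Proof. by move=> /cvg_norm; apply: cvgr_to_le. Qed.

Lemma ball_segment (R : realType) (V : normedModType R) (a x y : V) (r t : R) :
  ball a r x -> ball a r y -> 0 <= t <= 1 -> ball a r (x + t *: (y - x)).
Proof.
rewrite -!ball_normE /= => ax ay /andP[t0 t1].
have -> : a - (x + t *: (y - x)) = (1 - t) *: (a - x) + t *: (a - y).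
  have -> : y - x = (a - x) - (a - y) by rewrite opprB [RHS]addrC addrA subrK.
  by rewrite opprD addrA scalerBr opprB addrA scalerBl scale1r addrAC.
apply: le_lt_trans (ler_normD _ _) _.
rewrite !normrZ !ger0_norm ?subr_ge0 //.
set m := Num.max `|a - x| `|a - y|.
have m_lt : m < r by rewrite gt_max ax ay.
have h1 : (1 - t) * `|a - x| <= (1 - t) * m.
  by apply: ler_wpM2l; rewrite ?subr_ge0 // le_max lexx.
have h2 : t * `|a - y| <= t * m by apply: ler_wpM2l; rewrite // le_max lexx orbT.
lra.
Qed.

Lemma connected_locally_constant (T : topologicalType) (U : set T) (P : T -> Prop) :
  connected U -> (forall a, U a -> \forall x \near a, P x <-> P a) ->
  forall z0, U z0 -> P z0 -> forall z, U z -> P z.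
Proof.
move=> U_conn P_loc z0 Uz0 Pz0.
suff UP : [set z | U z /\ P z] = U by move=> z; rewrite -UP => -[].
apply: U_conn; first by exists z0.
- exists P°; first exact: open_interior.
  apply/seteqP; split=> z /=.
    by move=> [Uz Pz]; split=> //; move: (P_loc z Uz); apply: filterS => x ->.
  by move=> [Uz /nbhs_singleton].
- exists (~` (~` P)°); first exact/open_closedC/open_interior.
  apply/seteqP; split=> z /=.
    by move=> [Uz Pz]; split=> // /nbhs_singleton.
  move=> [Uz notNP]; split=> //; apply: contrapT => NPz; apply: notNP.
  by move: (P_loc z Uz); apply: filterS => x /= ->.
Qed.

Lemma subr_split3 (V : zmodType) (a b c p q d : V) :
  a - (b + c) = (a - p - (b - q)) + (p - (q + d)) + (d - c).
Proof.
rewrite !opprD ?opprB !addrA opprK subrK.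
by rewrite [X in _ = X - c]addrAC addrK [X in _ = X - c]addrAC subrK.
Qed.

Lemma rV_entry_le_norm (R : realType) n (v : 'rV[R]_n) i : `|v ord0 i| <= `|v|.
Proof.
rewrite [leRHS]/Num.norm /= mx_normrE.
by apply/bigmax_geP; right => /=; exists (ord0, i).
Qed.

Lemma rV_unit_sphere_compact (R : realType) n :
  compact [set v : 'rV[R]_n | `|v| = 1].
Proof.
apply: bounded_closed_compact.
  exists 1; split; first by rewrite num_real.
  by move=> M M1 v /= ->; apply: ltW.
apply: (@preimage_closed _ _ (fun v : 'rV[R]_n => `|v|) [set 1]).
  by move=> x _; apply: norm_continuous.
exact: closed_eq.
Qed.

Section finite_dimension.
Variables (R : realType) (A : normedModType R).

Definition spanning n (e : 'I_n -> A) :=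
  forall x, exists c : 'I_n -> R, x = \sum_(i < n) c i *: e i.

Definition free_family n (e : 'I_n -> A) :=
  forall c : 'I_n -> R, \sum_(i < n) c i *: e i = 0 -> forall i, c i = 0.

Lemma spanning_free_subfamily n (e : 'I_n -> A) : spanning e ->
  exists m (e' : 'I_m -> A), spanning e' /\ free_family e'.
Proof.
elim: n e => [|m IH] e e_span; first by exists 0%N, e; split => // c _ [].
have [e_free|e_dep] := pselect (free_family e); first by exists m.+1, e.
have [c [c_rel [j cj_neq0]]] : exists c : 'I_m.+1 -> R,
    \sum_(i < m.+1) c i *: e i = 0 /\ exists j, c j <> 0.
  apply: contra_notP e_dep => c_triv c c_rel i.
  by apply: contra_notP c_triv => ci; exists c; split => //; exists i.
apply: (IH (e \o lift j)) => x; have [d ->] := e_span x.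
exists (fun i => d (lift j i) - d j * (c j)^-1 * c (lift j i)).
move: c_rel; rewrite !(bigD1_ord j) //= => /eqP; rewrite addrC addr_eq0 => /eqP c_rel.
have -> : e j = - (c j)^-1 *: \sum_(i < m) c (lift j i) *: e (lift j i).
  by rewrite c_rel scalerN scaleNr opprK scalerA mulVf ?scale1r //; apply/eqP.
rewrite scalerA scaler_sumr -big_split /=; apply: eq_bigr => i _.
by rewrite scalerA -scalerDl; congr (_ *: _); ring.
Qed.

Section basis.
Variables (n : nat) (e : 'I_n -> A).
Hypotheses (e_span : spanning e) (e_free : free_family e).

Definition combination (v : 'rV[R]_n) : A := \sum_(i < n) v ord0 i *: e i.

Lemma combination_is_linear : linear combination.
Proof.
move=> a v w; rewrite /combination scaler_sumr -big_split /=.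
by apply: eq_bigr => i _; rewrite !mxE scalerDl scalerA.
Qed.

HB.instance Definition _ :=
  GRing.isLinear.Build R 'rV[R]_n A *:%R combination combination_is_linear.

Lemma combination_bound v : `|combination v| <= (\sum_(i < n) `|e i|) * `|v|.
Proof.
rewrite /combination mulrC mulr_sumr; apply: le_trans (ler_norm_sum _ _ _) _.
by apply: ler_sum => i _; rewrite normrZ ler_wpM2r // rV_entry_le_norm.
Qed.

Lemma combination_eq0 v : combination v = 0 -> v = 0.
Proof.
move=> /(e_free (c := fun i => v ord0 i)) v0.
by apply/rowP => i; rewrite mxE v0.
Qed.

Lemma combination_lower_bound :
  exists2 m : R, 0 < m & forall v, m * `|v| <= `|combination v|.
Proof.
pose S := [set v : 'rV[R]_n | `|v| = 1].
have normalize v : v != 0 -> S (`|v|^-1 *: v).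
  by move=> v0; rewrite /S /= normrZ normfV normr_id mulVf // normr_eq0.
have [[v0 Sv0]|S0] := pselect (S !=set0); last first.
  exists 1 => // v; have [->|v_neq0] := eqVneq v 0; first by rewrite normr0 mulr0.
  by exfalso; apply: S0; exists (`|v|^-1 *: v); apply: normalize.
have [c /set_mem Sc c_min] : exists2 c, c \in S &
    forall v, v \in S -> `|combination c| <= `|combination v|.
  apply: (@EVT_min_rV R n (fun v => `|combination v|) S (ex_intro _ v0 Sv0)).
    exact: rV_unit_sphere_compact.
  apply: continuous_subspaceT => v; apply: continuous_comp; last exact: norm_continuous.
  exact: (bounded_linear_continuous combination_bound).
exists `|combination c|.
  rewrite normr_gt0; apply/eqP => /combination_eq0 c0.
  by move: Sc; rewrite /S /= c0 normr0 => /eqP; rewrite eq_sym oner_eq0.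
move=> v; have [->|v_neq0] := eqVneq v 0; first by rewrite normr0 mulr0.
have := c_min _ (mem_set (normalize v v_neq0)).
by rewrite linearZ /= normrZ normfV normr_id ler_pdivlMl ?normr_gt0 // mulrC.
Qed.

Definition coords (x : A) : 'rV[R]_n := \row_i projT1 (cid (e_span x)) i.

Lemma coordsK x : combination (coords x) = x.
Proof.
rewrite [RHS](projT2 (cid (e_span x))); apply: eq_bigr => i _.
by rewrite mxE.
Qed.

Lemma coords_is_linear : linear coords.
Proof.
move=> a x y; apply/eqP; rewrite -subr_eq0; apply/eqP/combination_eq0.
by rewrite !linearB !linearP /= !coordsK scalerN addrACA !subrr addr0.
Qed.

Definition coord (i : 'I_n) (x : A) : R := coords x ord0 i.

Lemma coord_is_linear i : linear (coord i).
Proof. by move=> a x y; rewrite /coord coords_is_linear !mxE. Qed.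

Definition coord_linear i : {linear A -> R} :=
  HB.pack (coord i) (GRing.isLinear.Build R A R *:%R (coord i) (coord_is_linear i)).

Lemma coord_sum x : x = \sum_(i < n) coord i x *: e i.
Proof. by rewrite -[LHS]coordsK. Qed.

Lemma coord_bound : exists2 K : R, 0 < K & forall i x, `|coord i x| <= K * `|x|.
Proof.
have [m m_gt0 mP] := combination_lower_bound.
exists m^-1; rewrite ?invr_gt0 // => i x.
rewrite -(ler_pM2l m_gt0) mulrA mulfV ?gt_eqF // mul1r -[X in _ <= `|X|]coordsK.
apply: le_trans (mP _); rewrite ler_pM2l //; exact: rV_entry_le_norm.
Qed.

End basis.

Lemma finite_dim_coordinates : finite_dim A ->
  exists n (e : 'I_n -> A) (lam : 'I_n -> {linear A -> R}) (K : R),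
  [/\ 0 < K, forall x, x = \sum_(i < n) lam i x *: e i
           & forall i x, `|lam i x| <= K * `|x|].
Proof.
move=> [n0 [e0 e0_span]].
have [n [e [e_span e_free]]] := spanning_free_subfamily e0_span.
have [K K_gt0 KP] := coord_bound e_span e_free.
by exists n, e, (coord_linear e_span e_free), K; split => //; apply: coord_sum.
Qed.

End finite_dimension.

Section uniform_cauchy.
Variables (R : realType) (A : normedModType R).

Definition unif_cauchy_on (S : set A) (u : nat -> A -> A) : Prop :=
  forall eps : R, 0 < eps -> exists N : nat, forall p q : nat,
    (N <= p)%N -> (N <= q)%N -> forall z, S z -> `|u p z - u q z| < eps.

Lemma unif_cvg_on_cauchy S u : unif_cvg_on S u -> unif_cauchy_on S u.
Proof.
move=> [g u_g] eps eps_gt0.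
have [N NP] := u_g (eps / 2) (divr_gt0 eps_gt0 (ltr0Sn _ 1)).
exists N => p q Np Nq z Sz.
have -> : u p z - u q z = (u p z - g z) - (u q z - g z) by rewrite opprB addrA subrK.
by apply: le_lt_trans (ler_normB _ _) _; rewrite [eps]splitr ltrD ?NP.
Qed.

Lemma cvg_cauchy_seq (u : nat -> A) : cvg (u @ \oo) -> forall eps : R, 0 < eps ->
  exists N, forall p q, (N <= p)%N -> (N <= q)%N -> `|u p - u q| < eps.
Proof.
move=> /cvgrPdist_lt u_cvg eps eps_gt0.
have [N _ NP] := u_cvg (eps / 2) (divr_gt0 eps_gt0 (ltr0Sn _ 1)).
exists N => p q Np Nq.
have -> : u p - u q = (lim (u @ \oo) - u q) - (lim (u @ \oo) - u p).
  by rewrite opprB [RHS]addrC addrA subrK.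
by apply: le_lt_trans (ler_normB _ _) _; rewrite [eps]splitr ltrD ?NP.
Qed.

End uniform_cauchy.

Lemma derive_along_line (R : realType) (V W : normedModType R) (g : V -> W)
    (L : {linear W -> R}) (x v : V) (t : R) :
  continuous L -> differentiable g (x + t *: v) ->
  is_derive t 1 (fun s => L (g (x + s *: v))) (L ('d g (x + t *: v) v)).
Proof.
move=> L_cont g_diff; pose line := cst x + ( *:%R^~ v).
have line_diff : is_diff t line (0 + ( *:%R^~ v)) by apply: is_diffD.
have g_isdiff : is_diff (line t) g ('d g (x + t *: v)) by apply: differentiableP.
have L_diff : is_diff (g (line t)) L L.
  by apply: DiffDef; [apply: linear_differentiable | apply: diff_lin].
have comp_diff := is_diff_comp line_diff (is_diff_comp g_isdiff L_diff).
have comp_der : derivable (L \o (g \o line)) t 1 by apply/diff_derivable/ex_diff.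
have := derivableP comp_der; rewrite deriveE ?diff_val /=; last exact: ex_diff.
by rewrite add0r scale1r.
Qed.

Lemma mean_value_bound (R : realType) (psi dpsi : R -> R) (M : R) :
  (forall t : R, 0 <= t <= 1 -> is_derive t 1 psi (dpsi t) /\ `|dpsi t| <= M) ->
  `|psi 1 - psi 0| <= M.
Proof.
move=> psiP.
have [c c01 ->] : exists2 c, c \in `[0, 1]%R & psi 1 - psi 0 = dpsi c * (1 - 0).
  apply: MVT_segment => //.
    move=> t; rewrite in_itv /= => /andP[t0 t1].
    by have [] := psiP t; first by rewrite !ltW.
  apply: continuous_in_subspaceT => t; rewrite inE /= in_itv /= => t01.
  have [psi_der _] := psiP t t01.
  by apply/differentiable_continuous/derivable1_diffP; apply: ex_derive.
by rewrite subr0 mulr1; have [] := psiP c; rewrite -?in_itv.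
Qed.

Section coordinate_system.
Variables (R : realType) (A : normedModType R).
Variables (n : nat) (e : 'I_n -> A) (lam : 'I_n -> {linear A -> R}) (K : R).
Hypotheses (K_gt0 : 0 < K) (lam_sum : forall x, x = \sum_(i < n) lam i x *: e i)
  (lam_bound : forall i x, `|lam i x| <= K * `|x|).

Lemma linear_coord_bound (W : normedModType R) (T : {linear A -> W}) x :
  `|T x| <= K * (\sum_(i < n) `|T (e i)|) * `|x|.
Proof.
rewrite {1}(lam_sum x) linear_sum mulrAC mulr_sumr /=.
apply: le_trans (ler_norm_sum _ _ _) _; apply: ler_sum => i _.
by rewrite linearZ normrZ ler_wpM2r.
Qed.

Lemma linear_continuous_coord (W : normedModType R) (T : {linear A -> W}) :
  continuous T.
Proof. exact: bounded_linear_continuous (linear_coord_bound T). Qed.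

Lemma cauchy_filter_cvg (F : set_system A) : ProperFilter F -> cauchy F -> cvg F.
Proof.
move=> FF /cauchyP F_cauchy.
have lam_cvg i : cvg (lam i @ F).
  apply: cauchy_cvg; apply: cauchy_exP => eps eps_gt0.
  have [x Fx] := F_cauchy (eps / K) (divr_gt0 eps_gt0 K_gt0).
  exists (lam i x); rewrite /fmap /=; move: Fx; apply: filterS => y.
  rewrite -!ball_normE /= -linearB => xy.
  by apply: le_lt_trans (lam_bound _ _) _; rewrite -ltr_pdivlMl // mulrC.
have sum_id : (fun x => \sum_(i < n) lam i x *: e i) = id.
  by apply/funext => x; rewrite -lam_sum.
apply/cvg_ex; exists (\sum_(i < n) lim (lam i @ F) *: e i).
suff : (fun x => \sum_(i < n) lam i x *: e i) @ F -->
       \sum_(i < n) lim (lam i @ F) *: e i by rewrite sum_id.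
apply: (cvg_big (op := +%R) (x0 := 0) (P := xpredT) add_continuous) => // i _.
by apply: cvgZ; [exact: lam_cvg | exact: cvg_cst].
Qed.

Lemma unif_cauchy_cvg (S : set A) (u : nat -> A -> A) z :
  unif_cauchy_on S u -> S z -> cvg (u k z @[k --> \oo]).
Proof.
move=> u_cauchy Sz; apply: cauchy_filter_cvg; apply: cauchy_exP => eps eps_gt0.
have [N NP] := u_cauchy eps eps_gt0.
by exists (u N z), N => // p Np; rewrite -ball_normE /= NP.
Qed.

Lemma unif_cauchy_unif_cvg (S : set A) (u : nat -> A -> A) :
  unif_cauchy_on S u -> unif_cvg_on S u.
Proof.
move=> u_cauchy; exists (fun z => lim (u k z @[k --> \oo])) => eps eps_gt0.
have [N NP] := u_cauchy (eps / 2) (divr_gt0 eps_gt0 (ltr0Sn _ 1)).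
exists N => p Np z Sz; apply: le_lt_trans (_ : eps / 2 < eps); last by lra.
apply: (@cvg_norm_le _ _ _ \oo _ (fun q => u p z - u q z)).
  by apply: cvgB; [exact: cvg_cst | exact: unif_cauchy_cvg u_cauchy Sz].
by exists N => // q Nq; apply/ltW/NP.
Qed.

Lemma mean_value_ineq (g : A -> A) (x y : A) (eps : R) :
  (forall t : R, 0 <= t <= 1 -> differentiable g (x + t *: (y - x)) /\
      `|'d g (x + t *: (y - x)) (y - x)| <= eps) ->
  `|g y - g x| <= K * (\sum_(i < n) `|e i|) * eps.
Proof.
move=> gP.
have lam_incr i : `|lam i (g y - g x)| <= K * eps.
  rewrite linearB /=.
  have := @mean_value_bound _ (fun t => lam i (g (x + t *: (y - x))))
    (fun t => lam i ('d g (x + t *: (y - x)) (y - x))) (K * eps).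
  rewrite scale1r scale0r addr0 subrKC; apply => t t01; have [g_diff dg_le] := gP t t01.
  split; first exact: derive_along_line (linear_continuous_coord (T := lam i)) g_diff.
  by apply: le_trans (lam_bound _ _) _; rewrite ler_pM2l.
rewrite {1}(lam_sum (g y - g x)) mulrAC mulr_sumr.
apply: le_trans (ler_norm_sum _ _ _) _.
by apply: ler_sum => i _; rewrite normrZ ler_wpM2r.
Qed.

End coordinate_system.

Section unital_algebra.
Variables (R : realType) (A : normedModType R) (mul : A -> A -> A) (one : A).
Hypothesis alg : is_unital_algebra mul one.

Lemma lmul_is_linear a : linear (mul a).
Proof. by case: alg => _ _ _ _ mulD a' x y; apply: mulD. Qed.

Lemma rmul_is_linear b : linear (mul^~ b).
Proof. by case: alg => _ _ _ mulD _ a' x y; apply: mulD. Qed.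

Definition lmul a : {linear A -> A} :=
  HB.pack (mul a) (GRing.isLinear.Build R A A *:%R (mul a) (lmul_is_linear a)).

Definition rmul b : {linear A -> A} :=
  HB.pack (mul^~ b) (GRing.isLinear.Build R A A *:%R (mul^~ b) (rmul_is_linear b)).

Lemma mulBl x y b : mul (x - y) b = mul x b - mul y b.
Proof. exact: (linearB (rmul b)). Qed.

Lemma diff_A_derivative (f : A -> A) z h :
  A_differentiable mul f z -> 'd f z h = mul (A_derivative one f z) h.
Proof. by case: alg => _ mul1x _ _ _ [_ df_rlin]; rewrite -df_rlin mul1x. Qed.

Lemma A_differentiable_expansion (f : A -> A) z a :
  continuous (mul a) -> f \o shift z = cst (f z) + lmul a +o_ 0 id ->
  A_differentiable mul f z /\ A_derivative one f z = a.
Proof.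
move=> mula_cont f_exp; have df : 'd f z = lmul a :> (A -> A) by exact: diff_unique.
have [mulA _ mulx1 _ _] := alg.
split; first by split=> [|x y]; [apply/diff_locallyP; rewrite df | rewrite df /= mulA].
by rewrite /A_derivative df /= mulx1.
Qed.

End unital_algebra.

Section uniform_limit.
Variables (R : realType) (A : normedModType R) (mul : A -> A -> A) (one : A).
Hypothesis alg : is_unital_algebra mul one.
Variables (n : nat) (e : 'I_n -> A) (lam : 'I_n -> {linear A -> R}) (K : R).
Hypotheses (K_gt0 : 0 < K) (lam_sum : forall x, x = \sum_(i < n) lam i x *: e i)
  (lam_bound : forall i x, `|lam i x| <= K * `|x|).

Lemma mul_bound : exists2 C : R, 0 < C & forall x y, `|mul x y| <= C * `|x| * `|y|.
Proof.
pose M := \sum_(i < n) \sum_(j < n) `|mul (e i) (e j)|.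
have M_ge0 : 0 <= M by do 2!apply: sumr_ge0 => ? _.
have KKM_ge0 : 0 <= K * K * M by rewrite !mulr_ge0 // ltW.
exists (K * K * M + 1); first by lra.
move=> x y.
apply: le_trans (_ : K * K * M * `|x| * `|y| <= _); last first.
  by do 2!apply: ler_wpM2r => //; rewrite lerDl.
have := linear_coord_bound lam_sum lam_bound (rmul alg y) x => /= /le_trans; apply.
have sum_le : \sum_(i < n) `|mul (e i) y| <= K * M * `|y|.
  rewrite /M mulr_sumr mulr_suml; apply: ler_sum => i _.
  exact: (linear_coord_bound lam_sum lam_bound (lmul alg (e i))).
rewrite (_ : K * K * M * `|x| * `|y| = K * (K * M * `|y|) * `|x|); last by ring.
by apply: ler_wpM2r => //; apply: ler_wpM2l => //; apply: ltW.
Qed.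

Variables (U : set A) (f : nat -> A -> A).
Hypothesis f_diff : forall k z, U z -> A_differentiable mul (f k) z.

Local Notation f' := (fun k z => A_derivative one (f k) z).

Lemma increments_unif_small (a : A) (r : R) :
  ball a r `<=` U -> unif_cauchy_on (ball a r) f' ->
  forall eps, 0 < eps -> exists N, forall p q, (N <= p)%N -> (N <= q)%N ->
    forall x y, ball a r x -> ball a r y ->
      `|(f p y - f q y) - (f p x - f q x)| <= eps * `|y - x|.
Proof.
move=> aU f'_cauchy eps eps_gt0; have [C C_gt0 mulC] := mul_bound.
pose M := K * \sum_(i < n) `|e i|.
have MC_ge0 : 0 <= M * C by rewrite !mulr_ge0 ?sumr_ge0 ?ltW.
pose delta := eps / (M * C + 1).
have [N NP] := f'_cauchy delta (divr_gt0 eps_gt0 (ltr_wpDl MC_ge0 ltr01)).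
exists N => p q Np Nq x y ax ay.
apply: le_trans (mean_value_ineq K_gt0 lam_sum lam_bound
  (g := f p - f q) (eps := C * delta * `|y - x|) _) _.
  move=> t t01; have az := ball_segment ax ay t01.
  have [fp_Adiff fq_Adiff] := (f_diff p (aU _ az), f_diff q (aU _ az)).
  split; first exact: differentiableB fp_Adiff.1 fq_Adiff.1.
  rewrite (diffB fp_Adiff.1 fq_Adiff.1) /= (diff_A_derivative alg _ fp_Adiff).
  rewrite (diff_A_derivative alg _ fq_Adiff) -(mulBl alg).
  apply: le_trans (mulC _ _) _; apply: ler_wpM2r => //; apply: ler_wpM2l.
    exact: ltW.
  exact/ltW/NP.
rewrite mulrA ler_wpM2r // mulrA mulrA ler_pdivrMr; last exact: ltr_wpDl MC_ge0 ltr01.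
by rewrite mulrDr mulr1 mulrC lerDl ltW.
Qed.


Lemma unif_cauchy_on_ball (a : A) (r : R) p :
  ball a r `<=` U -> unif_cauchy_on (ball a r) f' ->
  ball a r p -> cvg (f k p @[k --> \oo]) -> unif_cauchy_on (ball a r) f.
Proof.
move=> aU f'_cauchy ap fp_cvg eps eps_gt0.
have r_gt0 : 0 < r by move: ap; rewrite -ball_normE; apply: le_lt_trans.
have eps2_gt0 : 0 < eps / 2 by rewrite divr_gt0.
have [N1 N1P] := cvg_cauchy_seq fp_cvg eps2_gt0.
have [N2 N2P] := increments_unif_small aU f'_cauchy
  (divr_gt0 eps2_gt0 (mulr_gt0 (ltr0Sn _ 1) r_gt0)).
exists (maxn N1 N2) => k l; rewrite !geq_max => /andP[k1 k2] /andP[l1 l2] z az.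
have zp_lt : `|z - p| < 2 * r.
  move: ap az; rewrite -!ball_normE /= => ap az.
  rewrite (_ : z - p = (a - p) - (a - z)); last by rewrite opprB [RHS]addrC addrA subrK.
  by apply: le_lt_trans (ler_normB _ _) _; rewrite mulr2n mulrDl mul1r ltrD.
rewrite -(subrK (f k p - f l p) (f k z - f l z)).
apply: le_lt_trans (ler_normD _ _) _; rewrite [eps]splitr.
apply: ler_ltD; last exact: N1P.
apply: le_trans (N2P _ _ k2 l2 _ _ ap az) _.
rewrite -[leRHS](@divfK _ (2 * r)) ?gt_eqF ?mulr_gt0 //.
by apply: ler_wpM2l; [rewrite ltW // !divr_gt0 // mulr_gt0 | exact: ltW].
Qed.

Lemma cvg_connected z0 : connected U ->
  (forall a, U a -> exists2 r : R, 0 < r &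
     ball a r `<=` U /\ unif_cvg_on (ball a r) f') ->
  U z0 -> cvg (f k z0 @[k --> \oo]) -> forall z, U z -> cvg (f k z @[k --> \oo]).
Proof.
move=> U_conn f'_loc Uz0 z0_cvg.
apply: (connected_locally_constant U_conn _ Uz0 z0_cvg) => a Ua.
have [r r_gt0 [aU /unif_cvg_on_cauchy f'_cauchy]] := f'_loc a Ua.
move: (nbhsx_ballx a r r_gt0); apply: filterS => x ax.
split=> pt_cvg; apply: (unif_cauchy_cvg K_gt0 lam_sum lam_bound
  (unif_cauchy_on_ball aU f'_cauchy _ pt_cvg)) => //; exact: ballxx.
Qed.

Lemma lim_increments_small (a : A) (r : R) :
  ball a r `<=` U -> unif_cauchy_on (ball a r) f' ->
  (forall x, ball a r x -> cvg (f k x @[k --> \oo])) ->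
  forall eps, 0 < eps -> exists N, forall k, (N <= k)%N ->
    forall x y, ball a r x -> ball a r y ->
      `|(lim (f q y @[q --> \oo]) - f k y) - (lim (f q x @[q --> \oo]) - f k x)|
        <= eps * `|y - x|.
Proof.
move=> aU f'_cauchy f_cvg eps eps_gt0.
have [N NP] := increments_unif_small aU f'_cauchy eps_gt0.
exists N => k Nk x y ax ay.
apply: (@cvg_norm_le _ _ _ \oo _ (fun q => (f q y - f k y) - (f q x - f k x))).
  by apply: cvgB; apply: cvgB;
    [exact: f_cvg | exact: cvg_cst | exact: f_cvg | exact: cvg_cst].
by exists N => // q Nq; apply: NP.
Qed.


Lemma lim_A_differentiable (z : A) (r : R) : 0 < r -> ball z r `<=` U ->
  unif_cvg_on (ball z r) f' -> (forall x, ball z r x -> cvg (f k x @[k --> \oo])) ->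
  A_differentiable mul (fun x => lim (f k x @[k --> \oo])) z /\
  A_derivative one (fun x => lim (f k x @[k --> \oo])) z = lim (f' k z @[k --> \oo]).
Proof.
move=> r_gt0 zU /unif_cvg_on_cauchy f'_cauchy f_cvg.
set F := fun x => _; set g := lim _; have [C C_gt0 mulC] := mul_bound.
have g_lim : f' k z @[k --> \oo] --> g.
  exact: (unif_cauchy_cvg K_gt0 lam_sum lam_bound f'_cauchy (ballxx z r_gt0)).
apply: (@A_differentiable_expansion _ _ _ _ alg F z g).
  exact: (linear_continuous_coord lam_sum lam_bound (T := lmul alg g)).
apply/eqaddoP => eps eps_gt0; have eps3_gt0 : 0 < eps / 3 by rewrite divr_gt0.
have [N1 N1P] := lim_increments_small zU f'_cauchy f_cvg eps3_gt0.
have [N2 _ N2P] := (cvgrPdist_le _ _).1 g_lim _ (divr_gt0 eps3_gt0 C_gt0).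
pose k := maxn N1 N2; have fk_Adiff := f_diff k (zU _ (ballxx z r_gt0)).
have fk_exp := (eqaddoP _ _ _ _).1 (diff_locally fk_Adiff.1) _ eps3_gt0.
near=> h; have zh : ball z r (h + z).
  rewrite -ball_normE /= opprD addrCA subrr addr0 normrN.
  by near: h; apply: nbhs0_lt.
have -> : (F \o shift z - (cst (F z) + lmul alg g)) h = F (h + z) - (F z + mul g h).
  by [].
rewrite (subr_split3 _ _ _ (f k (h + z)) (f k z) ('d (f k) z h)).
rewrite (_ : eps * `|h| = eps / 3 * `|h| + eps / 3 * `|h| + eps / 3 * `|h|); last first.
  by rewrite -!mulrDl; congr (_ * _); lra.
apply: le_trans (ler_normD _ _) _; apply: lerD.
  apply: le_trans (ler_normD _ _) _; apply: lerD.
    by have := N1P k (leq_maxl _ _) _ _ (ballxx z r_gt0) zh; rewrite addrK.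
  by near: h.
rewrite (diff_A_derivative alg _ fk_Adiff) -(mulBl alg); apply: le_trans (mulC _ _) _.
apply: ler_wpM2r => //; rewrite -ler_pdivlMl // mulrC distrC.
exact: N2P (leq_maxr _ _).
Unshelve. all: by end_near. Qed.

End uniform_limit.

Theorem theorem5p19 (R : realType) (A : normedModType R)
    (mul : A -> A -> A) (one : A)
    (hfd : finite_dim A) (halg : is_unital_algebra mul one)
    (U : set A) (hUo : open U) (hUc : connected U)
    (f : nat -> A -> A)
    (hf : forall n z, U z -> A_differentiable mul (f n) z)
    (z0 : A) (hz0 : U z0) (hcv0 : cvg (f n z0 @[n --> \oo]))
    (hB : forall a, U a -> exists2 r : R, 0 < r &
            ball a r `<=` U /\
            unif_cvg_on (ball a r) (fun n z => A_derivative one (f n) z)) :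
  (forall a (r : R), U a -> 0 < r -> ball a r `<=` U ->
     unif_cvg_on (ball a r) (fun n z => A_derivative one (f n) z) ->
     unif_cvg_on (ball a r) f) /\
  exists (F G : A -> A),
    (forall z, U z -> f n z @[n --> \oo] --> F z) /\
    (forall z, U z -> A_derivative one (f n) z @[n --> \oo] --> G z) /\
    (forall z, U z -> A_differentiable mul F z /\ A_derivative one F z = G z).
Proof.
have [n [e [lam [K [K_gt0 lam_sum lam_bound]]]]] := finite_dim_coordinates hfd.
have f_cvg := cvg_connected halg K_gt0 lam_sum lam_bound hf hUc hB hz0 hcv0.
split.
  move=> a r Ua r_gt0 aU /unif_cvg_on_cauchy f'_cauchy.
  apply: (unif_cauchy_unif_cvg K_gt0 lam_sum lam_bound).
  exact: (unif_cauchy_on_ball halg K_gt0 lam_sum lam_bound hf aU f'_cauchy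
    (ballxx a r_gt0) (f_cvg a Ua)).
exists (fun z => lim (f k z @[k --> \oo])),
  (fun z => lim (A_derivative one (f k) z @[k --> \oo])).
split; first exact: f_cvg.
split=> z Uz; have [r r_gt0 [zU f'_cvg]] := hB z Uz.
  exact: (unif_cauchy_cvg K_gt0 lam_sum lam_bound (unif_cvg_on_cauchy f'_cvg)
    (ballxx z r_gt0)).
apply: (lim_A_differentiable halg K_gt0 lam_sum lam_bound hf r_gt0 zU f'_cvg).
by move=> x zx; apply: f_cvg (zU _ zx).
Qed.
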